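(* Consider the multi-sender unicast index-coding instance with $N=5$ messages, $K=4$ senders with $\mathcal S_1=\{1,2,3\}$, $\mathcal S_2=\{2,3,4\}$, $\mathcal S_3=\{1,2\}$, $\mathcal S_4=\{2,4,5\}$, each with link capacity $C_k=1$, and receiver side information $\mathcal A_1=\{4,5\}$, $\mathcal A_2=\{1,3,5\}$, $\mathcal A_3=\{1,2\}$, $\mathcal A_4=\{2,3,5\}$, $\mathcal A_5=\{3\}$. Its capacity region is $$\mathcal C=\left\{(R_1,\dots,R_5)\in\mathbb R_+^5:\begin{array}{l}R_1\le2,\ R_3\le2,\ R_5\le1,\ R_1+R_3\le3,\ R_4+R_5\le2,\\ R_1+R_2+R_5\le4,\ R_2+R_4+R_5\le4,\ R_3+R_4+R_5\le3\end{array}\right\}.$$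
   Context: Model. $N$ independent messages $M_1,\dots,M_N$, $M_j$ uniform on $[1:2^{nR_j}]$ ($n$ the block length). Sender $k$ knows the messages $M_i$, $i\in\mathcal S_k$, and sends an index $L_k=f_k((M_i)_{i\in\mathcal S_k})\in[1:2^{nC_k})=\{1,\dots,2^{\lfloor nC_k\rfloor}\}$ over a noiseless broadcast link reaching all receivers. Receiver $j$ knows $M_i$, $i\in\mathcal A_j$, and must output an estimate $\hat M_j=g_j(L_1,\dots,L_K,(M_i)_{i\in\mathcal A_j})$ of $M_j$. A rate tuple is achievable if there exist such codes with $\Pr[(\hat M_1,\dots,\hat M_N)\ne(M_1,\dots,M_N)]\to0$ as $n\to\infty$; the capacity region $\mathcal C$ is the closure of the set of achievable rate tuples. *)

From Stdlib Require Import Reals Lra Lia ZArith Arith List.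
Import ListNotations.
Open Scope R_scope.

(* floor of a real, as a natural number (negative values mapped to 0) *)
Definition nfloor (x : R) : nat := Z.to_nat (Int_part x).

Fixpoint tuples (sz : list nat) : list (list nat) :=
  match sz with
  | [] => [[]]
  | s :: sz' => flat_map (fun x => map (cons x) (tuples sz')) (seq 0 s)
  end.

(* Index-coding instance: messages/receivers are indexed 0..N-1 (N = length A),
   senders 0..K-1 (K = length S).  S k = messages known to sender k,
   A j = side information of receiver j, C k = link capacity of sender k.
   A message M_j takes values in a set of size 2^{floor(n R_j)} (encoded as
   0..size-1), index L_k takes values in a set of size 2^{floor(n C_k)}. *)

Definition msg_sizes (N n : nat) (Rt : nat -> R) : list nat :=
  map (fun j => (2 ^ nfloor (INR n * Rt j))%nat) (seq 0 N).

Definition agree_on (I : list nat) (m m' : list nat) : Prop :=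
  forall i, In i I -> nth i m 0%nat = nth i m' 0%nat.

Definition valid_code (S A : list (list nat)) (C : list R) (n : nat) (Rt : nat -> R)
    (fs : list (list nat -> nat)) (gs : list (list nat -> list nat -> nat)) : Prop :=
  length fs = length S /\ length gs = length A /\
  (forall k, (k < length S)%nat ->
     (forall m m', agree_on (nth k S []) m m' ->
        nth k fs (fun _ => 0%nat) m = nth k fs (fun _ => 0%nat) m') /\
     (forall m, In m (tuples (msg_sizes (length A) n Rt)) ->
        (nth k fs (fun _ => 0%nat) m < 2 ^ nfloor (INR n * nth k C 0%R))%nat)) /\
  (forall j, (j < length A)%nat ->
     forall l m m', agree_on (nth j A []) m m' ->
        nth j gs (fun _ _ => 0%nat) l m = nth j gs (fun _ _ => 0%nat) l m').

Definition decodes_ok (N : nat) (fs : list (list nat -> nat))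
    (gs : list (list nat -> list nat -> nat)) (m : list nat) : bool :=
  forallb (fun j => Nat.eqb (nth j gs (fun _ _ => 0%nat) (map (fun f => f m) fs) m)
                            (nth j m 0%nat))
          (seq 0 N).

(* Error probability under independent uniform messages. *)
Definition error_prob (N n : nat) (Rt : nat -> R)
    (fs : list (list nat -> nat)) (gs : list (list nat -> list nat -> nat)) : R :=
  let T := tuples (msg_sizes N n Rt) in
  INR (length (filter (fun m => negb (decodes_ok N fs gs m)) T)) / INR (length T).

Definition achievable (S A : list (list nat)) (C : list R) (Rt : nat -> R) : Prop :=
  (forall j, (j < length A)%nat -> 0 <= Rt j) /\
  exists (fs : nat -> list (list nat -> nat))
         (gs : nat -> list (list nat -> list nat -> nat)),
    (forall n, valid_code S A C n Rt (fs n) (gs n)) /\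
    Un_cv (fun n => error_prob (length A) n Rt (fs n) (gs n)) 0.

Definition in_capacity_region (S A : list (list nat)) (C : list R) (Rt : nat -> R) : Prop :=
  forall eps, eps > 0 ->
    exists Rt', achievable S A C Rt' /\
      forall j, (j < length A)%nat -> Rabs (Rt j - Rt' j) < eps.

(* The instance of the theorem (0-indexed: message i+1 of the paper is index i). *)
Definition ex_S : list (list nat) := [[0;1;2]; [1;2;3]; [0;1]; [1;3;4]]%nat.
Definition ex_A : list (list nat) := [[3;4]; [0;2;4]; [0;1]; [1;2;4]; [2]]%nat.
Definition ex_C : list R := [1; 1; 1; 1].

From Stdlib Require Import Reals List Permutation Lia Lra ZArith Bool.
Import ListNotations.

(* Suppose that, given the messages in [K] and the transmissions of the
   senders in [W], the receivers in [D] can decode one after the other (each from the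
   broadcast and the messages given or already decoded), and that every sender outside [W]
   sees only messages in [K].  Then on correctly decoded tuples the messages in [D] are a
   function of those in [K] and of the [sum_W floor (n C_k)] bits sent by [W], so at most
   half of the tuples decode correctly unless [sum_D floor (n R_j) <= sum_W floor (n C_k)];
   letting [n] grow gives [sum_D R_j <= sum_W C_k] for achievable rates, and closure keeps
   it.  Each of the eight inequalities of the region is such a bound.

   An explicit linear (xor) code, whose piece sizes are fractions [f], [d],
   [u] of a link, decodes without error.  For a point of the region [f], [d], [u] can be
   chosen so that all constraints of the code hold, with the slack needed for rounding once
   the rates are lowered by [eps / 2]. *)

(** * Message tuples *)

Open Scope nat_scope.

Lemma app_eq_app_length {X : Type} (l1 l2 l1' l2' : list X) :
  length l1 = length l1' -> l1 ++ l2 = l1' ++ l2' -> l1 = l1' /\ l2 = l2'.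
Proof.
  revert l1'; induction l1 as [|x l1 IH]; intros [|x' l1'] Hl E; cbn in *;
    try discriminate; [auto|].
  injection E as -> E. destruct (IH l1' ltac:(lia) E) as [-> ->]. auto.
Qed.

Lemma Permutation_seq_lt (l : list nat) (N j : nat) :
  Permutation l (seq 0 N) -> In j l -> j < N.
Proof. intros Hl Hj. apply (Permutation_in _ Hl), in_seq in Hj. lia. Qed.


Lemma In_tuples (sz t : list nat) :
  In t (tuples sz) <->
  length t = length sz /\ (forall i, i < length sz -> nth i t 0 < nth i sz 0).
Proof.
  revert t; induction sz as [|s sz IH]; intros t; cbn.
  - split.
    + intros [<-|[]]; split; [reflexivity | intros; lia].
    + intros [H _]; destruct t; [now left | discriminate].
  - rewrite in_flat_map. split.
    + intros [x [Hx Ht]]. apply in_map_iff in Ht as [t' [<- Ht']].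
      apply in_seq in Hx. apply IH in Ht' as [Hl Hn].
      split; [cbn; lia|]. intros [|i] Hi; cbn; [lia|]. apply Hn; lia.
    + intros [Hl Hn]. destruct t as [|x t]; [discriminate|].
      exists x. split.
      * apply in_seq. specialize (Hn 0 ltac:(lia)). cbn in Hn. lia.
      * apply in_map, IH. cbn in Hl. split; [lia|].
        intros i Hi. apply (Hn (S i)). lia.
Qed.

Lemma app_In_tuples (s1 s2 t1 t2 : list nat) :
  In t1 (tuples s1) -> In t2 (tuples s2) -> In (t1 ++ t2) (tuples (s1 ++ s2)).
Proof.
  revert t1; induction s1 as [|s s1 IH]; intros t1 H1 H2; cbn in *.
  - destruct H1 as [<-|[]]. exact H2.
  - apply in_flat_map in H1 as [x [Hx Ht]]. apply in_map_iff in Ht as [t [Et Ht]].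
    subst t1. apply in_flat_map. exists x. split; [exact Hx|]. cbn. apply in_map, IH; assumption.
Qed.

Lemma map_In_tuples {X : Type} (g h : X -> nat) (l : list X) :
  (forall x, In x l -> g x < h x) -> In (map g l) (tuples (map h l)).
Proof.
  induction l as [|x l IH]; intros H; cbn; [now left|].
  apply in_flat_map. exists (g x). split.
  - apply in_seq. specialize (H x (or_introl eq_refl)). lia.
  - apply in_map, IH. intros y Hy. apply H. now right.
Qed.

Lemma length_tuples_pow2 (es : list nat) :
  length (tuples (map (Nat.pow 2) es)) = 2 ^ list_sum es.
Proof.
  induction es as [|e es IH]; cbn; [reflexivity|].
  rewrite (flat_map_constant_length (c := length (tuples (map (Nat.pow 2) es))))
    by (intros; apply length_map).
  now rewrite length_seq, IH, Nat.pow_add_r.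
Qed.

Lemma NoDup_tuples (sz : list nat) : NoDup (tuples sz).
Proof.
  induction sz as [|s sz IH]; cbn; [repeat constructor; auto|].
  generalize (seq_NoDup s 0). generalize (seq 0 s). intros l Hl.
  induction l as [|x l IHl]; cbn; [constructor|].
  inversion Hl; subst. apply NoDup_app.
  - apply NoDup_map_NoDup_ForallPairs; [|exact IH].
    intros a b _ _ E. now injection E.
  - now apply IHl.
  - intros a Ha Hb. apply in_map_iff in Ha as [t [<- _]].
    apply in_flat_map in Hb as [y [Hy Hy']].
    apply in_map_iff in Hy' as [t' [E _]]. injection E as -> _. contradiction.
Qed.

Lemma filter_length_le_inj {X Y : Type} (P : X -> bool) (phi : X -> Y) (l : list X) (l' : list Y) :
  NoDup l ->
  (forall x, In x l -> P x = true -> In (phi x) l') ->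
  (forall x y, In x l -> In y l -> P x = true -> P y = true -> phi x = phi y -> x = y) ->
  length (filter P l) <= length l'.
Proof.
  intros Hl Hin Hinj. rewrite <- (length_map phi).
  apply NoDup_incl_length.
  - apply NoDup_map_NoDup_ForallPairs; [|now apply NoDup_filter].
    intros x y Hx Hy E. apply filter_In in Hx, Hy. apply Hinj; tauto.
  - intros y Hy. apply in_map_iff in Hy as [x [<- Hx]].
    apply filter_In in Hx. apply Hin; tauto.
Qed.

Open Scope R_scope.

Definition nbits (n : nat) (x : R) : nat := nfloor (INR n * x).

Lemma nfloor_spec (x : R) : 0 <= x -> INR (nfloor x) <= x /\ x - 1 < INR (nfloor x).
Proof.
  intros Hx. unfold nfloor. destruct (base_Int_part x) as [H1 H2].
  assert (Hz : (0 <= Int_part x)%Z).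
  { apply le_IZR. destruct (Rle_or_lt 0 (IZR (Int_part x))) as [h|h]; [exact h|].
    exfalso. assert (IZR (Int_part x) <= -1) by (apply IZR_le; apply lt_IZR in h; lia).
    lra. }
  rewrite INR_IZR_INZ, Z2Nat.id by exact Hz. lra.
Qed.

Lemma nbits_spec (n : nat) (x : R) :
  0 <= x -> INR (nbits n x) <= INR n * x /\ INR n * x - 1 < INR (nbits n x).
Proof. intros Hx. apply nfloor_spec, Rmult_le_pos; [apply pos_INR | exact Hx]. Qed.

Lemma nbits_1 (n : nat) : nbits n 1 = n.
Proof. unfold nbits, nfloor. rewrite Rmult_1_r, Int_part_INR. apply Nat2Z.id. Qed.

Lemma nbits_0 (n : nat) : nbits n 0 = 0%nat.
Proof.
  unfold nbits, nfloor. rewrite Rmult_0_r.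
  change 0 with (INR 0). now rewrite Int_part_INR.
Qed.

Lemma msg_sizes_pow2 (N n : nat) (Rt : nat -> R) :
  msg_sizes N n Rt = map (Nat.pow 2) (map (fun j => nbits n (Rt j)) (seq 0 N)).
Proof. unfold msg_sizes. now rewrite map_map. Qed.

Lemma length_msg_tuples (N n : nat) (Rt : nat -> R) :
  length (tuples (msg_sizes N n Rt)) = (2 ^ list_sum (map (fun j => nbits n (Rt j)) (seq 0 N)))%nat.
Proof. now rewrite msg_sizes_pow2, length_tuples_pow2. Qed.

Lemma nth_msg_sizes (N n : nat) (Rt : nat -> R) (i : nat) :
  (i < N)%nat -> nth i (msg_sizes N n Rt) 0%nat = (2 ^ nbits n (Rt i))%nat.
Proof.
  intros Hi. rewrite msg_sizes_pow2, map_map.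
  rewrite (nth_indep _ _ (2 ^ nbits n (Rt 0%nat))%nat) by (rewrite length_map, length_seq; lia).
  rewrite (map_nth (fun j => 2 ^ nbits n (Rt j))%nat), seq_nth by lia. reflexivity.
Qed.

Lemma In_msg_tuples (N n : nat) (Rt : nat -> R) (m : list nat) :
  In m (tuples (msg_sizes N n Rt)) ->
  length m = N /\ (forall i, (i < N)%nat -> (nth i m 0 < 2 ^ nbits n (Rt i))%nat).
Proof.
  intros Hm. apply In_tuples in Hm as [Hl Hn].
  assert (HN : length (msg_sizes N n Rt) = N)
    by (unfold msg_sizes; now rewrite length_map, length_seq).
  rewrite HN in Hl, Hn. split; [exact Hl|].
  intros i Hi. rewrite <- (nth_msg_sizes N n Rt i Hi). now apply Hn.
Qed.

(** * Decoding chains and the outer bound *)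

Open Scope nat_scope.

Definition broadcast (fs : list (list nat -> nat)) (m : list nat) : list nat :=
  map (fun f => f m) fs.

Lemma nth_broadcast fs m k : nth k (broadcast fs m) 0 = nth k fs (fun _ => 0) m.
Proof. exact (map_nth (fun f => f m) fs (fun _ => 0) k). Qed.

(* Receivers in [D] can decode their messages one after the other, each from the
   broadcast and the messages in [K] or decoded before it. *)
Fixpoint decoding_chain (A : list (list nat)) (K D : list nat) : Prop :=
  match D with
  | [] => True
  | j :: D' => incl (nth j A []) K /\ decoding_chain A (j :: K) D'
  end.

Section DecodingChain.
Variables (S A : list (list nat)) (C : list R) (n : nat) (Rt : nat -> R)
  (fs : list (list nat -> nat)) (gs : list (list nat -> list nat -> nat)).
Hypothesis code : valid_code S A C n Rt fs gs.
Variables (K D W : list nat).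
Hypothesis senders_W : forall w, In w W -> w < length S.
Hypothesis senders_K : forall k, k < length S -> In k W \/ incl (nth k S []) K.
Hypothesis partition_KD : Permutation (K ++ D) (seq 0 (length A)).
Hypothesis chain_KD : decoding_chain A K D.

Let T := tuples (msg_sizes (length A) n Rt).
Let good := decodes_ok (length A) fs gs.

Lemma In_KD_lt i : In i (K ++ D) -> i < length A.
Proof. exact (Permutation_seq_lt _ _ _ partition_KD). Qed.

Lemma decodes_ok_nth m j :
  good m = true -> j < length A -> nth j gs (fun _ _ => 0) (broadcast fs m) m = nth j m 0.
Proof.
  intros Hm Hj. apply Nat.eqb_eq. unfold good, decodes_ok in Hm.
  rewrite forallb_forall in Hm. apply Hm, in_seq. lia.
Qed.

Lemma decoder_agree m m' j :
  good m = true -> good m' = true -> broadcast fs m = broadcast fs m' ->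
  j < length A -> agree_on (nth j A []) m m' -> nth j m 0 = nth j m' 0.
Proof.
  intros Hm Hm' Hl Hj Ha.
  rewrite <- (decodes_ok_nth m j), <- (decodes_ok_nth m' j), Hl by assumption.
  destruct code as (_ & _ & _ & Hdec). now apply Hdec.
Qed.

Lemma broadcast_agree m m' :
  agree_on K m m' ->
  (forall w, In w W -> nth w fs (fun _ => 0) m = nth w fs (fun _ => 0) m') ->
  broadcast fs m = broadcast fs m'.
Proof.
  intros HK HW. destruct code as (Hlen & _ & Henc & _).
  apply nth_ext with (d := 0) (d' := 0); unfold broadcast; rewrite !length_map; [reflexivity|].
  intros k Hk. fold (broadcast fs m) (broadcast fs m'). rewrite !nth_broadcast.
  rewrite Hlen in Hk. destruct (senders_K k Hk) as [Hw|Hsub]; [now apply HW|].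
  apply (proj1 (Henc k Hk)). intros i Hi. now apply HK, Hsub.
Qed.

Lemma agree_on_chain I J m m' :
  good m = true -> good m' = true -> broadcast fs m = broadcast fs m' ->
  (forall j, In j J -> j < length A) -> decoding_chain A I J ->
  agree_on I m m' -> agree_on (I ++ J) m m'.
Proof.
  intros Hm Hm' Hl. revert I.
  induction J as [|j J IH]; intros I HJ Hch HI; [now rewrite app_nil_r|].
  destruct Hch as [Hj Hch].
  assert (Hjm : nth j m 0 = nth j m' 0).
  { apply decoder_agree; auto; [apply HJ; now left | intros i Hi; now apply HI, Hj]. }
  assert (IHj : agree_on ((j :: I) ++ J) m m').
  { apply IH; [intros i Hi; apply HJ; now right | exact Hch |].
    intros i [<-|Hi]; [exact Hjm | now apply HI]. }
  intros i Hi. apply IHj. rewrite in_app_iff in *. cbn in *. tauto.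
Qed.

Lemma good_tuple_determined m m' :
  In m T -> In m' T -> good m = true -> good m' = true -> agree_on K m m' ->
  (forall w, In w W -> nth w fs (fun _ => 0) m = nth w fs (fun _ => 0) m') ->
  m = m'.
Proof.
  intros HmT Hm'T Hm Hm' HK HW.
  assert (HKD : agree_on (K ++ D) m m').
  { apply agree_on_chain; auto using broadcast_agree.
    intros j Hj. apply In_KD_lt, in_app_iff. now right. }
  apply In_msg_tuples in HmT as [Hlm _], Hm'T as [Hlm' _].
  apply nth_ext with (d := 0) (d' := 0); [congruence|].
  intros i Hi. apply HKD, (Permutation_in _ (Permutation_sym partition_KD)), in_seq. lia.
Qed.

Lemma good_length_le :
  length (filter good T) <=
  2 ^ (list_sum (map (fun i => nbits n (Rt i)) K) +
       list_sum (map (fun w => nbits n (nth w C 0%R)) W)).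
Proof.
  rewrite <- list_sum_app, <- length_tuples_pow2, map_app, !map_map.
  apply (filter_length_le_inj good
           (fun m => map (fun i => nth i m 0) K ++ map (fun w => nth w fs (fun _ => 0) m) W)).
  - apply NoDup_tuples.
  - intros m Hm _. apply app_In_tuples; apply map_In_tuples.
    + intros i Hi. apply In_msg_tuples in Hm as [_ Hnth].
      apply Hnth, In_KD_lt, in_app_iff. now left.
    + intros w Hw. destruct code as (_ & _ & Henc & _). now apply Henc; [apply senders_W|].
  - intros m m' Hm Hm' Pm Pm' E.
    apply app_eq_app_length in E as [EK EW]; [|now rewrite !length_map].
    apply good_tuple_determined; auto.
    + intros i Hi. exact (ext_in_map EK i Hi).
    + intros w Hw. exact (ext_in_map EW w Hw).
Qed.

Lemma good_tuples_le_half :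
  list_sum (map (fun w => nbits n (nth w C 0%R)) W) < list_sum (map (fun j => nbits n (Rt j)) D) ->
  2 * length (filter good T) <= length T.
Proof.
  intros Hlt. unfold T. rewrite length_msg_tuples.
  rewrite <- (Permutation_list_sum (Permutation_map _ partition_KD)), map_app, list_sum_app.
  eapply Nat.le_trans; [apply Nat.mul_le_mono_l, good_length_le|].
  rewrite <- Nat.pow_succ_r'. apply Nat.pow_le_mono_r; lia.
Qed.
End DecodingChain.

Open Scope R_scope.

Definition rsum (x : nat -> R) (l : list nat) : R := fold_right (fun j s => x j + s) 0 l.

Lemma nbits_sum_lb (n : nat) (x : nat -> R) (l : list nat) :
  (forall j, In j l -> 0 <= x j) ->
  INR n * rsum x l - INR (length l) <= INR (list_sum (map (fun j => nbits n (x j)) l)).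
Proof.
  induction l as [|j l IH]; intros Hx; cbn [rsum fold_right map length]; [cbn; lra|].
  change (list_sum (?a :: ?l)) with (a + list_sum l)%nat.
  rewrite plus_INR, S_INR, Rmult_plus_distr_l.
  destruct (nbits_spec n (x j) (Hx j (or_introl eq_refl))) as [_ Hj].
  specialize (IH (fun i Hi => Hx i (or_intror Hi))). unfold rsum in IH. lra.
Qed.

Lemma nbits_sum_ub (n : nat) (x : nat -> R) (l : list nat) :
  (forall j, In j l -> 0 <= x j) ->
  INR (list_sum (map (fun j => nbits n (x j)) l)) <= INR n * rsum x l.
Proof.
  induction l as [|j l IH]; intros Hx; cbn [rsum fold_right map]; [cbn; lra|].
  change (list_sum (?a :: ?l)) with (a + list_sum l)%nat.
  rewrite plus_INR, Rmult_plus_distr_l.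
  destruct (nbits_spec n (x j) (Hx j (or_introl eq_refl))) as [Hj _].
  specialize (IH (fun i Hi => Hx i (or_intror Hi))). unfold rsum in IH. lra.
Qed.

Lemma error_prob_ge_half (N n : nat) (Rt : nat -> R) fs gs :
  (2 * length (filter (decodes_ok N fs gs) (tuples (msg_sizes N n Rt)))
     <= length (tuples (msg_sizes N n Rt)))%nat ->
  / 2 <= error_prob N n Rt fs gs.
Proof.
  intros Hgood. unfold error_prob. cbv zeta.
  pose proof (filter_length (decodes_ok N fs gs) (tuples (msg_sizes N n Rt))) as Hsplit.
  assert (Hpos : 0 < INR (length (tuples (msg_sizes N n Rt)))).
  { apply lt_0_INR. rewrite length_msg_tuples. apply Nat.neq_0_lt_0, Nat.pow_nonzero. lia. }
  set (T := tuples (msg_sizes N n Rt)) in *.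
  set (bad := length (filter (fun m => negb (decodes_ok N fs gs m)) T)) in *.
  assert (Hbad : (length T <= 2 * bad)%nat) by lia.
  apply le_INR in Hbad. rewrite mult_INR in Hbad. replace (INR 2) with 2 in Hbad by (cbn; lra).
  apply (Rmult_le_reg_r (INR (length T))); [exact Hpos|].
  unfold Rdiv. rewrite Rmult_assoc, Rinv_l, Rmult_1_r by lra. lra.
Qed.

Theorem achievable_decoding_bound S A C Rt (K D W : list nat) :
  (forall k, 0 <= nth k C 0) ->
  (forall w, In w W -> (w < length S)%nat) ->
  (forall k, (k < length S)%nat -> In k W \/ incl (nth k S []) K) ->
  Permutation (K ++ D) (seq 0 (length A)) -> decoding_chain A K D ->
  achievable S A C Rt -> rsum Rt D <= rsum (fun k => nth k C 0) W.
Proof.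
  intros HC HW HK HKD Hch [Hnn [fs [gs [Hcode Hcv]]]].
  apply Rnot_lt_le. intros Hlt.
  assert (HD : forall j, In j D -> 0 <= Rt j).
  { intros j Hj. apply Hnn, (Permutation_seq_lt _ _ _ HKD), in_or_app. now right. }
  destruct (Hcv (/ 2) ltac:(lra)) as [N1 HN1].
  destruct (INR_archimed (rsum Rt D - rsum (fun k => nth k C 0) W) (INR (length D) + 1))
    as [N2 HN2]; [lra|].
  set (n := Nat.max N1 N2).
  assert (Hn : INR N2 <= INR n) by (apply le_INR; lia).
  assert (Hhalf : / 2 <= error_prob (length A) n Rt (fs n) (gs n)).
  { apply error_prob_ge_half.
    apply (good_tuples_le_half S A C n Rt (fs n) (gs n) (Hcode n) K D W); auto.
    apply INR_lt.
    pose proof (nbits_sum_lb n Rt D HD).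
    pose proof (nbits_sum_ub n (fun k => nth k C 0) W (fun k _ => HC k)).
    nra. }
  specialize (HN1 n ltac:(lia)). unfold R_dist in HN1.
  rewrite Rminus_0_r, Rabs_right in HN1 by lra. lra.
Qed.

Lemma capacity_region_nonneg S A C Rt j :
  (j < length A)%nat -> in_capacity_region S A C Rt -> 0 <= Rt j.
Proof.
  intros Hj HC. apply Rnot_lt_le. intros Hlt.
  destruct (HC (- Rt j) ltac:(lra)) as [Rt' [[Hnn _] Hclose]].
  specialize (Hclose j Hj). specialize (Hnn j Hj). apply Rabs_def2 in Hclose. lra.
Qed.

Lemma rsum_close (x y : nat -> R) (l : list nat) (e : R) :
  (forall j, In j l -> Rabs (x j - y j) < e) -> rsum x l - rsum y l <= INR (length l) * e.
Proof.
  induction l as [|j l IH]; intros Hxy; cbn [rsum fold_right length]; [cbn; lra|].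
  rewrite S_INR. pose proof (Rabs_def2 _ _ (Hxy j (or_introl eq_refl))).
  specialize (IH (fun i Hi => Hxy i (or_intror Hi))). unfold rsum in IH. lra.
Qed.

Lemma capacity_region_rsum_le S A C Rt (D : list nat) (c : R) :
  (forall j, In j D -> (j < length A)%nat) ->
  (forall Rt', achievable S A C Rt' -> rsum Rt' D <= c) ->
  in_capacity_region S A C Rt -> rsum Rt D <= c.
Proof.
  intros HD Hach HC. apply Rnot_lt_le. intros Hlt.
  set (e := (rsum Rt D - c) / (INR (length D) + 1)).
  pose proof (pos_INR (length D)).
  assert (He : 0 < e) by (apply Rdiv_lt_0_compat; lra).
  destruct (HC e He) as [Rt' [Ha Hclose]].
  pose proof (rsum_close Rt Rt' D e (fun j Hj => Hclose j (HD j Hj))).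
  pose proof (Hach Rt' Ha).
  assert (INR (length D) * e = rsum Rt D - c - e) by (unfold e; field; lra).
  lra.
Qed.

Corollary capacity_region_decoding_bound S A C Rt (K D W : list nat) :
  (forall k, 0 <= nth k C 0) ->
  (forall w, In w W -> (w < length S)%nat) ->
  (forall k, (k < length S)%nat -> In k W \/ incl (nth k S []) K) ->
  Permutation (K ++ D) (seq 0 (length A)) -> decoding_chain A K D ->
  in_capacity_region S A C Rt -> rsum Rt D <= rsum (fun k => nth k C 0) W.
Proof.
  intros HC HW HK HKD Hch. apply capacity_region_rsum_le.
  - intros j Hj. apply (Permutation_seq_lt _ _ _ HKD), in_or_app. now right.
  - intros Rt'. now apply achievable_decoding_bound with K.
Qed.

Lemma ex_C_nonneg k : 0 <= nth k ex_C 0.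
Proof. do 4 (destruct k as [|k]; [cbn; lra|]). destruct k; cbn; lra. Qed.

(* [decoding_bound HC K D W] adds [rsum Rt D <= rsum C W]: the receivers [D] decode in this
   order given the messages [K] and the transmissions of the senders [W]. *)
Ltac decoding_bound HC K D W :=
  let H := fresh "bound" in
  assert (H := capacity_region_decoding_bound ex_S ex_A ex_C _ K D W ex_C_nonneg
    ltac:(intros ? ?; cbn in *; lia)
    ltac:(intros k Hk; cbn in Hk;
          do 4 (destruct k as [|k]; [first [left; cbn; lia | right; intros ? ?; cbn in *; lia]|]);
          lia)
    ltac:(apply NoDup_Permutation;
          [repeat constructor; cbn; lia | apply seq_NoDup | intro; cbn; lia])
    ltac:(cbn; repeat split; intros ? ?; cbn in *; lia)
    HC);
  cbn in H.

Lemma ex_outer_bound Rt : in_capacity_region ex_S ex_A ex_C Rt ->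
  Rt 0%nat <= 2 /\ Rt 2%nat <= 2 /\ Rt 4%nat <= 1 /\
  Rt 0%nat + Rt 2%nat <= 3 /\ Rt 3%nat + Rt 4%nat <= 2 /\
  Rt 0%nat + Rt 1%nat + Rt 4%nat <= 4 /\
  Rt 1%nat + Rt 3%nat + Rt 4%nat <= 4 /\
  Rt 2%nat + Rt 3%nat + Rt 4%nat <= 3.
Proof.
  intros HC.
  decoding_bound HC [1;2;3;4]%nat [0]%nat [0;2]%nat.
  decoding_bound HC [0;1;3;4]%nat [2]%nat [0;1]%nat.
  decoding_bound HC [0;1;2;3]%nat [4]%nat [3]%nat.
  decoding_bound HC [1;3;4]%nat [0;2]%nat [0;1;2]%nat.
  decoding_bound HC [0;1;2]%nat [4;3]%nat [1;3]%nat.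
  decoding_bound HC [2;3]%nat [4;0;1]%nat [0;1;2;3]%nat.
  decoding_bound HC [0;2]%nat [4;1;3]%nat [0;1;2;3]%nat.
  decoding_bound HC [0;1]%nat [2;4;3]%nat [0;1;3]%nat.
  repeat split; lra.
Qed.

(** * A linear code and the inner bound *)

Open Scope nat_scope.

Definition seg (x i l p : nat) : nat := Nat.shiftl ((Nat.shiftr x i) mod 2 ^ l) p.

Lemma testbit_seg x i l p q :
  Nat.testbit (seg x i l p) q = (p <=? q) && (q <? p + l) && Nat.testbit x (q - p + i).
Proof.
  unfold seg. destruct (Nat.leb_spec p q).
  - rewrite Nat.shiftl_spec_high' by lia. destruct (Nat.ltb_spec q (p + l)).
    + rewrite Nat.mod_pow2_bits_low, Nat.shiftr_spec' by lia. reflexivity.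
    + rewrite Nat.mod_pow2_bits_high by lia. now rewrite andb_false_r.
  - now rewrite Nat.shiftl_spec_low by lia.
Qed.

Lemma testbit_mod_pow2 x l q : Nat.testbit (x mod 2 ^ l) q = (q <? l) && Nat.testbit x q.
Proof.
  destruct (Nat.ltb_spec q l).
  - now rewrite Nat.mod_pow2_bits_low by lia.
  - now rewrite Nat.mod_pow2_bits_high by lia.
Qed.

Lemma testbit_above x l q : x < 2 ^ l -> l <= q -> Nat.testbit x q = false.
Proof.
  intros Hx Hq. rewrite <- (Nat.mod_small x (2 ^ l)) by exact Hx.
  now apply Nat.mod_pow2_bits_high.
Qed.

Notation xor := Nat.lxor.

(* Messages are cut into pieces
   (sizes in bits, [n] the link length):
     x0 = a1 a2 a3 (lf, ld, lu),   x1 = b1 b2 b3 b4 b5 (n, n-lf, ld, n-ld-lu, n-ld-le),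
     x2 = c1 c2 (n, n-lf),         x3 = d1 d2 (lf, ld),        x4 = e (le),
   and, with [+] the bitwise xor and [b|k] the first [k] bits of [b], the senders send
     L0 = a1 + b1 + c1,            L1 = (d1 + b1|lf + c1|lf) (b2 + c2),
     L2 = (a2 + b3) a3 b4,         L3 = (b3 + d2) e b5.
   E.g. receiver 0 reads [a1 + d1] off [L0 + L1] and [a2 + d2] off [L2 + L3]. *)
Section LinearCode.
Variables (n lf ld lu le : nat).

Definition off_b3 := 2 * n - lf.
Definition off_b4 := off_b3 + ld.
Definition off_b5 := off_b4 + (n - ld - lu).

Definition enc0 x0 x1 x2 := xor (xor (seg x0 0 lf 0) (seg x1 0 n 0)) (seg x2 0 n 0) mod 2 ^ n.
Definition enc1 x1 x2 x3 :=
  xor (xor (xor (xor (seg x3 0 lf 0) (seg x1 0 lf 0)) (seg x1 n (n - lf) lf))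
           (seg x2 0 lf 0)) (seg x2 n (n - lf) lf) mod 2 ^ n.
Definition enc2 x0 x1 :=
  xor (xor (xor (seg x0 lf ld 0) (seg x1 off_b3 ld 0)) (seg x0 (lf + ld) lu ld))
      (seg x1 off_b4 (n - ld - lu) (ld + lu)) mod 2 ^ n.
Definition enc3 x1 x3 x4 :=
  xor (xor (xor (seg x1 off_b3 ld 0) (seg x3 lf ld 0)) (seg x4 0 le ld))
      (seg x1 off_b5 (n - ld - le) (ld + le)) mod 2 ^ n.

Definition dec0 L0 L1 L2 L3 x3 :=
  xor (xor (xor (xor (xor (xor (seg L0 0 lf 0) (seg L1 0 lf 0)) (seg x3 0 lf 0))
    (seg L2 0 ld lf)) (seg L3 0 ld lf)) (seg x3 lf ld lf)) (seg L2 ld lu (lf + ld)).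
Definition dec1 L0 L1 L2 L3 x0 x2 :=
  xor (xor (xor (xor (xor (xor (xor (seg L0 0 n 0) (seg x0 0 lf 0)) (seg x2 0 n 0))
    (seg L1 lf (n - lf) n)) (seg x2 n (n - lf) n))
    (xor (seg L2 0 ld off_b3) (seg x0 lf ld off_b3)))
    (seg L2 (ld + lu) (n - ld - lu) off_b4)) (seg L3 (ld + le) (n - ld - le) off_b5).
Definition dec2 L0 L1 x0 x1 :=
  xor (xor (xor (seg L0 0 n 0) (seg x0 0 lf 0)) (seg x1 0 n 0))
      (xor (seg L1 lf (n - lf) n) (seg x1 n (n - lf) n)).
Definition dec3 L1 L3 x1 x2 :=
  xor (xor (xor (seg L1 0 lf 0) (seg x1 0 lf 0)) (seg x2 0 lf 0))
      (xor (seg L3 0 ld lf) (seg x1 off_b3 ld lf)).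
Definition dec4 L3 := seg L3 ld le 0.

Definition scheme_encoders : list (list nat -> nat) :=
  [fun m => enc0 (nth 0 m 0) (nth 1 m 0) (nth 2 m 0);
   fun m => enc1 (nth 1 m 0) (nth 2 m 0) (nth 3 m 0);
   fun m => enc2 (nth 0 m 0) (nth 1 m 0);
   fun m => enc3 (nth 1 m 0) (nth 3 m 0) (nth 4 m 0)].

Definition scheme_decoders : list (list nat -> list nat -> nat) :=
  [fun L m => dec0 (nth 0 L 0) (nth 1 L 0) (nth 2 L 0) (nth 3 L 0) (nth 3 m 0);
   fun L m => dec1 (nth 0 L 0) (nth 1 L 0) (nth 2 L 0) (nth 3 L 0) (nth 0 m 0) (nth 2 m 0);
   fun L m => dec2 (nth 0 L 0) (nth 1 L 0) (nth 0 m 0) (nth 1 m 0);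
   fun L m => dec3 (nth 1 L 0) (nth 3 L 0) (nth 1 m 0) (nth 2 m 0);
   fun L m => dec4 (nth 3 L 0)].

Variables (k0 k1 k2 k3 x0 x1 x2 x3 x4 : nat).
Hypotheses (Hlf : lf <= n) (Hldu : ld + lu <= n) (Hlde : ld + le <= n).
Hypotheses (Hk0 : k0 <= lf + ld + lu) (Hk1 : k1 + lf + ld + lu + le <= 4 * n)
  (Hk2 : k2 + lf <= 2 * n) (Hk3 : k3 <= lf + ld).
Hypotheses (Hx0 : x0 < 2 ^ k0) (Hx1 : x1 < 2 ^ k1) (Hx2 : x2 < 2 ^ k2) (Hx3 : x3 < 2 ^ k3)
  (Hx4 : x4 < 2 ^ le).

Let L0 := enc0 x0 x1 x2.
Let L1 := enc1 x1 x2 x3.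
Let L2 := enc2 x0 x1.
Let L3 := enc3 x1 x3 x4.

Ltac split_tests := repeat match goal with
  | |- context [?x <=? ?y] => first [ rewrite (proj2 (Nat.leb_le x y)) by lia
                                    | rewrite (proj2 (Nat.leb_gt x y)) by lia
                                    | destruct (Nat.leb_spec x y) ]; cbn [andb]
  | |- context [?x <? ?y] => first [ rewrite (proj2 (Nat.ltb_lt x y)) by lia
                                   | rewrite (proj2 (Nat.ltb_ge x y)) by lia
                                   | destruct (Nat.ltb_spec x y) ]; cbn [andb]
  end.

Ltac same_bit_index := repeat match goal with
  | |- context [Nat.testbit ?x ?e1] => match goal with
    | |- context [Nat.testbit x ?e2] =>
      tryif constr_eq e1 e2 then fail
      else replace (Nat.testbit x e2) with (Nat.testbit x e1) by (f_equal; lia)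
    end
  end.

Ltac xor_cancel := repeat match goal with
  | |- context [Nat.testbit ?x ?e] => let h := fresh in destruct (Nat.testbit x e) eqn:h
  end; reflexivity.

Ltac bitwise_check x k :=
  unfold L0, L1, L2, L3, dec0, dec1, dec2, dec3, dec4, enc0, enc1, enc2, enc3,
    off_b5, off_b4, off_b3;
  repeat rewrite ?Nat.lxor_spec, ?testbit_seg, ?testbit_mod_pow2;
  split_tests; cbn [andb xorb negb]; rewrite ?Nat.sub_0_r, ?Nat.add_0_r; same_bit_index;
  try (rewrite (testbit_above x k) by lia); xor_cancel.

Lemma dec0_correct : dec0 L0 L1 L2 L3 x3 = x0.
Proof.
  apply Nat.bits_inj; intro q.
  destruct (Nat.lt_ge_cases q lf); [|destruct (Nat.lt_ge_cases q (lf + ld));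
    [|destruct (Nat.lt_ge_cases q (lf + ld + lu))]].
  all: bitwise_check x0 k0.
Qed.

Lemma dec1_correct : dec1 L0 L1 L2 L3 x0 x2 = x1.
Proof.
  apply Nat.bits_inj; intro q.
  destruct (Nat.lt_ge_cases q lf); [|destruct (Nat.lt_ge_cases q n);
    [|destruct (Nat.lt_ge_cases q (2 * n - lf));
    [|destruct (Nat.lt_ge_cases q (2 * n - lf + ld));
    [|destruct (Nat.lt_ge_cases q (2 * n - lf + ld + (n - ld - lu)));
    [|destruct (Nat.lt_ge_cases q (2 * n - lf + ld + (n - ld - lu) + (n - ld - le)))]]]]].
  all: bitwise_check x1 k1.
Qed.

Lemma dec2_correct : dec2 L0 L1 x0 x1 = x2.
Proof.
  apply Nat.bits_inj; intro q.
  destruct (Nat.lt_ge_cases q lf); [|destruct (Nat.lt_ge_cases q n);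
    [|destruct (Nat.lt_ge_cases q (2 * n - lf))]].
  all: bitwise_check x2 k2.
Qed.

Lemma dec3_correct : dec3 L1 L3 x1 x2 = x3.
Proof.
  apply Nat.bits_inj; intro q.
  destruct (Nat.lt_ge_cases q lf); [|destruct (Nat.lt_ge_cases q (lf + ld))].
  all: bitwise_check x3 k3.
Qed.

Lemma dec4_correct : dec4 L3 = x4.
Proof.
  apply Nat.bits_inj; intro q.
  destruct (Nat.lt_ge_cases q le).
  all: bitwise_check x4 le.
Qed.

Lemma scheme_decodes_ok : decodes_ok 5 scheme_encoders scheme_decoders [x0; x1; x2; x3; x4] = true.
Proof.
  unfold decodes_ok. cbn [seq forallb nth map scheme_encoders scheme_decoders].
  fold L0 L1 L2 L3.
  now rewrite dec0_correct, dec1_correct, dec2_correct, dec3_correct, dec4_correct, !Nat.eqb_refl.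
Qed.
End LinearCode.

Open Scope R_scope.

Lemma scheme_valid n lf ld lu le Rt :
  valid_code ex_S ex_A ex_C n Rt (scheme_encoders n lf ld lu le) (scheme_decoders n lf ld lu le).
Proof.
  split; [reflexivity|]. split; [reflexivity|]. split.
  - intros k Hk. cbn in Hk. split.
    + intros m m' Hm.
      do 4 (destruct k as [|k]; [cbn; repeat rewrite Hm by (cbn; lia); reflexivity|]). lia.
    + intros m _. change (nfloor (INR n * nth k ex_C 0)) with (nbits n (nth k ex_C 0)).
      do 4 (destruct k as [|k];
        [cbn [nth ex_C scheme_encoders]; rewrite nbits_1; unfold enc0, enc1, enc2, enc3;
         apply Nat.mod_upper_bound, Nat.pow_nonzero; lia|]).
      lia.
  - intros j Hj L m m' Hm. cbn in Hj.
    do 5 (destruct j as [|j]; [cbn; repeat rewrite Hm by (cbn; lia); reflexivity|]). lia.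
Qed.

Lemma scheme_error_prob_0 n Rt lf ld lu :
  let k j := nbits n (Rt j) in
  (lf <= n)%nat -> (ld + lu <= n)%nat -> (ld + k 4 <= n)%nat ->
  (k 0 <= lf + ld + lu)%nat -> (k 1 + lf + ld + lu + k 4 <= 4 * n)%nat ->
  (k 2 + lf <= 2 * n)%nat -> (k 3 <= lf + ld)%nat ->
  error_prob 5 n Rt (scheme_encoders n lf ld lu (k 4%nat))
    (scheme_decoders n lf ld lu (k 4%nat)) = 0.
Proof.
  intros k H1 H2 H3 H4 H5 H6 H7. unfold error_prob. cbv zeta.
  erewrite filter_ext_in, filter_false; [apply Rmult_0_l|].
  intros m Hm. apply In_msg_tuples in Hm as [Hlen Hlt].
  destruct m as [|x0 [|x1 [|x2 [|x3 [|x4 [|]]]]]]; try discriminate.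
  pose proof (Hlt 0%nat ltac:(lia)). pose proof (Hlt 1%nat ltac:(lia)).
  pose proof (Hlt 2%nat ltac:(lia)). pose proof (Hlt 3%nat ltac:(lia)).
  pose proof (Hlt 4%nat ltac:(lia)). cbn [nth] in *.
  now erewrite scheme_decodes_ok
    with (k0 := k 0%nat) (k1 := k 1%nat) (k2 := k 2%nat) (k3 := k 3%nat).
Qed.

Open Scope R_scope.

Lemma nbits_eventually_le (x y1 y2 y3 : R) :
  0 <= x -> 0 <= y1 -> 0 <= y2 -> 0 <= y3 -> x = 0 \/ x < y1 + y2 + y3 ->
  exists N, forall n, (n >= N)%nat -> (nbits n x <= nbits n y1 + nbits n y2 + nbits n y3)%nat.
Proof.
  intros Hx H1 H2 H3 [->|Hlt].
  - exists 0%nat. intros n _. rewrite nbits_0. lia.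
  - destruct (INR_archimed (y1 + y2 + y3 - x) 3) as [N HN]; [lra|].
    exists N. intros n Hn. apply le_INR in Hn.
    destruct (nbits_spec n x Hx) as [Hx' _].
    destruct (nbits_spec n y1 H1) as [_ Hy1], (nbits_spec n y2 H2) as [_ Hy2],
      (nbits_spec n y3 H3) as [_ Hy3].
    apply Nat.lt_le_incl, INR_lt. rewrite !plus_INR. nra.
Qed.

Lemma scheme_achievable (Rt : nat -> R) (f d u : R) :
  (forall j, (j < 5)%nat -> 0 <= Rt j) -> 0 <= f <= 1 -> 0 <= d -> 0 <= u ->
  d + u <= 1 -> d + Rt 4%nat <= 1 -> Rt 1%nat + Rt 4%nat + f + d + u <= 4 ->
  Rt 2%nat + f <= 2 ->
  Rt 0%nat = 0 \/ Rt 0%nat < f + d + u -> Rt 3%nat = 0 \/ Rt 3%nat < f + d ->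
  achievable ex_S ex_A ex_C Rt.
Proof.
  intros Hnn Hf Hd Hu Hdu Hd4 H14 H2 H0 H3.
  split; [exact Hnn|].
  exists (fun n => scheme_encoders n (nbits n f) (nbits n d) (nbits n u) (nbits n (Rt 4%nat))),
    (fun n => scheme_decoders n (nbits n f) (nbits n d) (nbits n u) (nbits n (Rt 4%nat))).
  split; [intros n; apply scheme_valid|].
  destruct (nbits_eventually_le (Rt 0%nat) f d u (Hnn 0%nat ltac:(lia)) ltac:(lra) ltac:(lra)
    ltac:(lra) H0) as [N0 HN0].
  destruct (nbits_eventually_le (Rt 3%nat) f d 0 (Hnn 3%nat ltac:(lia)) ltac:(lra) ltac:(lra)
    ltac:(lra) ltac:(rewrite Rplus_0_r; exact H3)) as [N3 HN3].
  intros eps Heps. exists (Nat.max N0 N3). intros n Hn.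
  specialize (HN0 n ltac:(lia)). specialize (HN3 n ltac:(lia)). rewrite nbits_0 in HN3.
  pose proof (pos_INR n).
  destruct (nbits_spec n f ltac:(lra)) as [Bf _], (nbits_spec n d Hd) as [Bd _],
    (nbits_spec n u Hu) as [Bu _].
  destruct (nbits_spec n _ (Hnn 1%nat ltac:(lia))) as [B1 _],
    (nbits_spec n _ (Hnn 2%nat ltac:(lia))) as [B2 _],
    (nbits_spec n _ (Hnn 4%nat ltac:(lia))) as [B4 _].
  unfold R_dist. rewrite scheme_error_prob_0, Rminus_0_r, Rabs_R0; try lia; [exact Heps|..];
    apply INR_le; rewrite ?plus_INR, ?mult_INR; cbn [INR]; nra.
Qed.

Lemma ex_inner_bound (Rt : nat -> R) (eps : R) :
  0 < eps ->
  0 <= Rt 0%nat -> 0 <= Rt 1%nat -> 0 <= Rt 2%nat -> 0 <= Rt 3%nat -> 0 <= Rt 4%nat ->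
  Rt 0%nat <= 2 -> Rt 2%nat <= 2 -> Rt 4%nat <= 1 ->
  Rt 0%nat + Rt 2%nat <= 3 -> Rt 3%nat + Rt 4%nat <= 2 ->
  Rt 0%nat + Rt 1%nat + Rt 4%nat <= 4 -> Rt 1%nat + Rt 3%nat + Rt 4%nat <= 4 ->
  Rt 2%nat + Rt 3%nat + Rt 4%nat <= 3 ->
  exists Rt', achievable ex_S ex_A ex_C Rt' /\
    forall j, (j < length ex_A)%nat -> Rabs (Rt j - Rt' j) < eps.
Proof.
  intros Heps h0 h1 h2 h3 h4 c1 c2 c3 c4 c5 c6 c7 c8.
  set (f := Rmax 0 (Rmax (Rt 0%nat - 1) (Rt 3%nat + Rt 4%nat - 1))).
  assert (Hf : 0 <= f <= 1 /\ Rt 0%nat - 1 <= f /\ Rt 3%nat + Rt 4%nat - 1 <= f /\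
               Rt 2%nat + f <= 2 /\ Rt 1%nat + Rt 4%nat + f <= 4)
    by (unfold f, Rmax; repeat destruct Rle_dec; lra).
  clearbody f.
  set (d := Rmax 0 (Rt 3%nat - f)).
  assert (Hd : 0 <= d /\ Rt 3%nat <= f + d /\ d + Rt 4%nat <= 1 /\
               Rt 1%nat + Rt 4%nat + f + d <= 4)
    by (unfold d, Rmax; destruct Rle_dec; lra).
  clearbody d.
  set (u := Rmax 0 (Rt 0%nat - f - d)).
  assert (Hu : 0 <= u /\ Rt 0%nat <= f + d + u /\ d + u <= 1 /\
               Rt 1%nat + Rt 4%nat + f + d + u <= 4)
    by (unfold u, Rmax; destruct Rle_dec; lra).
  clearbody u.
  exists (fun j => Rmax 0 (Rt j - eps / 2)). split.
  - apply (scheme_achievable _ f d u); try (intros; apply Rmax_l);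
      unfold Rmax; repeat destruct Rle_dec; lra.
  - intros j Hj. cbn in Hj. assert (0 <= Rt j) by (do 5 (destruct j as [|j]; [assumption|]); lia).
    unfold Rmax. destruct Rle_dec; apply Rabs_def1; lra.
Qed.

Theorem mainTheorem6 (Rt : nat -> R) :
  in_capacity_region ex_S ex_A ex_C Rt <->
  (0 <= Rt 0%nat /\ 0 <= Rt 1%nat /\ 0 <= Rt 2%nat /\ 0 <= Rt 3%nat /\ 0 <= Rt 4%nat /\
   Rt 0%nat <= 2 /\ Rt 2%nat <= 2 /\ Rt 4%nat <= 1 /\
   Rt 0%nat + Rt 2%nat <= 3 /\ Rt 3%nat + Rt 4%nat <= 2 /\
   Rt 0%nat + Rt 1%nat + Rt 4%nat <= 4 /\
   Rt 1%nat + Rt 3%nat + Rt 4%nat <= 4 /\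
   Rt 2%nat + Rt 3%nat + Rt 4%nat <= 3).
Proof.
  split.
  - intros HC.
    assert (Hnn : forall j, (j < 5)%nat -> 0 <= Rt j)
      by (intros j Hj; now apply (capacity_region_nonneg ex_S ex_A ex_C)).
    destruct (ex_outer_bound Rt HC) as (b1 & b2 & b3 & b4 & b5 & b6 & b7 & b8).
    repeat split; solve [apply Hnn; lia | assumption].
  - intros (h0 & h1 & h2 & h3 & h4 & c1 & c2 & c3 & c4 & c5 & c6 & c7 & c8) eps Heps.
    now apply ex_inner_bound.
Qed.
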